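(* Let $n,k$ be integers with $1<k<n-1$ and let $\mathcal{P}_{k,n}=\{x\in[0,1]^n:\sum_{i=1}^n x_i=k\}$. There is no strong Bernoulli factory for $\mathcal{P}_{k,n}$ that converges exponentially.
   Context: A Bernoulli factory with output set $V$ (for inputs $x\in[0,1]^n$) is a (possibly infinite) rooted binary tree whose internal nodes are labeled by an index $i\in[n]$ or a known constant $c\in(0,1)$ and whose leaves are labeled by elements of $V$; on input $x$ one walks from the root, at a node labeled $i$ flipping a fresh independent coin that is $1$ with probability $x_i$, at a node labeled $c$ a fresh coin of bias $c$, following the edge labeled by the outcome, and outputs the label of the leaf reached; $\mathcal{F}(x)$ is the output ($\emptyset$ if no leaf is reached). For a polytope $\mathcal{P}$ with vertex set $V$, a strong Bernoulli factory for $\mathcal{P}$ is such a factory with output set $V$ that terminates almost surely and satisfies $\mathbb{E}[\mathcal{F}(x)]=x$ for all $x\in\mathcal{P}$. Let $T_{\mathcal{F}}(x)$ be the depth of the leaf at which the execution of $\mathcal{F}$ on input $x$ terminates ($\infty$ if it does not terminate). $\mathcal{F}$ converges exponentially on a domain $S$ (here $S=\mathcal{P}_{k,n}$) if there is a constant $c<1$ with $\Pr[T_{\mathcal{F}}(x)>d]\le c^d$ for all positive integers $d$ and all $x\in S$. *)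

From HB Require Import structures.
From mathcomp Require Import all_boot all_order all_algebra.
From mathcomp Require Import all_classical all_reals all_analysis.
Set Implicit Arguments. Unset Strict Implicit. Unset Printing Implicit Defensive.
Import Order.TTheory GRing.Theory Num.Theory.
Import numFieldNormedType.Exports.
Local Open Scope classical_set_scope.
Local Open Scope ring_scope.

(* LCoin i  : flip a coin of bias x_i;
   LConst c : flip a coin of known bias c (required to lie in (0,1));
   LLeaf v  : leaf with output v (a point of R^n, a row vector);
   LNone    : no node here (the walk falls off the tree, output is the empty
              output / non-termination). *)
Inductive label (n : nat) (R : Type) :=
  | LCoin of 'I_n
  | LConst of R
  | LLeaf of 'rV[R]_n
  | LNone.
Arguments LNone {n R}.

(* A (possibly infinite) rooted binary tree: the label of the node reached
   from the root by following the edge-label sequence p (true = outcome 1).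
   Labels below a leaf / missing node are irrelevant. *)
Definition bftree (n : nat) (R : Type) := seq bool -> label n R.

Fixpoint reach_from {R : realType} {n : nat} (T : bftree n R) (x : 'rV[R]_n)
    (pre p : seq bool) : R :=
  match p with
  | [::] => 1
  | b :: p' =>
    match T pre with
    | LCoin i => (if b then x ord0 i else 1 - x ord0 i) * reach_from T x (rcons pre b) p'
    | LConst c => (if b then c else 1 - c) * reach_from T x (rcons pre b) p'
    | _ => 0
    end
  end.

Definition reach {R : realType} {n : nat} (T : bftree n R) (x : 'rV[R]_n)
  (p : seq bool) : R := reach_from T x [::] p.

Definition term_prob {R : realType} {n : nat} (T : bftree n R) (x : 'rV[R]_n)
  (m : nat) : R :=
  \sum_(p : m.-tuple bool) (if T (tval p) is LLeaf _ then reach T x p else 0).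

Definition out_contrib {R : realType} {n : nat} (T : bftree n R) (x : 'rV[R]_n)
  (j : 'I_n) (m : nat) : R :=
  \sum_(p : m.-tuple bool)
     (if T (tval p) is LLeaf v then reach T x p * v ord0 j else 0).

(* Pr[T_F(x) > d] (non-termination counts as T = infinity). *)
Definition tail_prob {R : realType} {n : nat} (T : bftree n R) (x : 'rV[R]_n)
  (d : nat) : R := 1 - \sum_(m < d.+1) term_prob T x m.

Definition vertex {R : realType} {n : nat} (S : set 'rV[R]_n) (v : 'rV[R]_n) :=
  S v /\ forall y z : 'rV[R]_n, S y -> S z -> forall t : R, 0 < t < 1 ->
     v = t *: y + (1 - t) *: z -> y = z.

Definition Pkn (R : realType) (n k : nat) : set 'rV[R]_n :=
  [set x | (forall i, 0 <= x ord0 i <= 1) /\ \sum_(i < n) x ord0 i = k%:R].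

Definition strong_BF {R : realType} {n : nat} (S : set 'rV[R]_n) (T : bftree n R) :=
  (forall p, match T p with
             | LConst c => 0 < c < 1
             | LLeaf v => vertex S v
             | _ => True
             end)
  /\ (forall x, S x -> (fun N => \sum_(m < N) term_prob T x m) @ \oo --> (1 : R))
  /\ (forall x, S x -> forall j : 'I_n,
        (fun N => \sum_(m < N) out_contrib T x j m) @ \oo --> x ord0 j).

Definition converges_exp {R : realType} {n : nat} (S : set 'rV[R]_n) (T : bftree n R) :=
  exists c : R, c < 1 /\
    forall x, S x -> forall d : nat, (0 < d)%N -> tail_prob T x d <= c ^+ d.
Arguments Pkn : clear implicits.

From mathcomp Require Import all_boot all_order all_algebra.
From mathcomp Require Import all_classical all_reals all_analysis.
From mathcomp Require Import ring lra zify.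
Set Implicit Arguments. Unset Strict Implicit. Unset Printing Implicit Defensive.
Import Order.TTheory GRing.Theory Num.Theory.
Import numFieldNormedType.Exports.
Local Open Scope classical_set_scope.
Local Open Scope ring_scope.

(* Let c < 1 be the rate of exponential convergence and s = k / (n - k).
   Indexing coordinates from 0, the point [tilt e] of P_{k,n} has coordinates
   1 - e below k and s e from k on, so coordinate k of its mean output is s e.
   A leaf whose output has positive coordinate k is reached only through a
   1-outcome of coin k and a 0-outcome of some coin i < k whose output
   coordinate is below 1: otherwise the point with x_k = 0 (resp. x_i = 1),
   which charges every other outcome, would reach it, against E[F_k] = 0
   (resp. E[F_i] = 1).  At [tilt e] both outcomes have probability
   proportional to e, and every other outcome has probability at most rho
   times its probability at a fixed [tilt e0], with rho c < 1.  Hence a path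
   of length m is followed at [tilt e] with probability at most
   (e/e0)^2 rho^m times that at [tilt e0], and the exponential tail at
   [tilt e0] makes the sum over paths converge: s e = O(e^2), which fails
   for small e. *)

Lemma count_gt1 (T : eqType) (a : pred T) (s : seq T) (x y : T) :
  x != y -> a x -> a y -> x \in s -> y \in s -> (1 < count a s)%N.
Proof.
move=> xy ax ay xs ys.
have disj : count (predI (pred1 x) (pred1 y)) s = 0%N.
  rewrite (@eq_count _ _ pred0) ?count_pred0 // => z /=.
  by apply/negbTE/andP => -[/eqP zx /eqP zy]; move: xy; rewrite -zx zy eqxx.
have := count_predUI (pred1 x) (pred1 y) s; rewrite disj addn0 => sumE.
have : (count (predU (pred1 x) (pred1 y)) s <= count a s)%N.
  by apply: sub_count => z /= /orP[] /eqP ->.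
have cx : (0 < count (pred1 x) s)%N by rewrite -has_count has_pred1.
have cy : (0 < count (pred1 y) s)%N by rewrite -has_count has_pred1.
lia.
Qed.

Section PartialSums.
Variable R : realType.

Lemma partial_sum_le_lim (a : nat -> R) (l : R) :
  (forall m, 0 <= a m) -> (fun N => \sum_(m < N) a m) @ \oo --> l ->
  forall N, \sum_(m < N) a m <= l.
Proof.
move=> a_ge0 al N.
have nd : nondecreasing_seq (fun N => \sum_(m < N) a m).
  move=> p q /subnKC <-; rewrite big_split_ord /= lerDl.
  exact: sumr_ge0.
by have := nondecreasing_cvgn_le nd (cvgP _ al) N; rewrite (cvg_lim _ al).
Qed.

Lemma partial_sum_cvg0_eq0 (a : nat -> R) :
  (forall m, 0 <= a m) -> (fun N => \sum_(m < N) a m) @ \oo --> 0 ->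
  forall m, a m = 0.
Proof.
move=> a_ge0 a0 m; have := partial_sum_le_lim a_ge0 a0 m.+1.
rewrite big_ord_recr /=; have := a_ge0 m.
have : 0 <= \sum_(i < m) a i by exact: sumr_ge0.
lra.
Qed.

Lemma sum_expr_le (q : R) (N : nat) :
  0 <= q -> q < 1 -> \sum_(m < N) q ^+ m <= (1 - q)^-1.
Proof.
move=> q0 q1; have q1' : 0 < 1 - q by rewrite subr_gt0.
rewrite -(ler_pM2l q1') mulfV ?gt_eqF //.
have -> : (1 - q) * \sum_(m < N) q ^+ m = 1 - q ^+ N.
  by rewrite -[1 - q]opprB mulNr -subrX1 opprB.
by rewrite gerBl exprn_ge0.
Qed.

Lemma weighted_sum_le (tp : nat -> R) (rho c : R) (N : nat) :
  0 <= c -> 1 <= rho -> rho * c < 1 ->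
  (forall m, 0 <= tp m) -> tp 0%N <= 1 -> (forall m, tp m.+1 <= c ^+ m) ->
  \sum_(m < N) rho ^+ m * tp m <= 1 + rho / (1 - rho * c).
Proof.
move=> c0 rho1 rhoc tp0 tp01 tp_le; have rho0 : 0 <= rho by lra.
case: N => [|N]; first by rewrite big_ord0 addr_ge0 ?divr_ge0 ?subr_ge0 // ltW.
rewrite big_ord_recl expr0 mul1r lerD //.
have -> : \sum_(m < N) rho ^+ (bump 0 m) * tp (bump 0 m)
          = rho * \sum_(m < N) rho ^+ m * tp m.+1.
  by rewrite mulr_sumr; apply: eq_bigr => m _; rewrite exprS mulrA.
rewrite ler_pM2l ?(lt_le_trans ltr01) //.
apply: le_trans (sum_expr_le N (mulr_ge0 rho0 c0) rhoc).
apply: ler_sum => m _; rewrite exprMn.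
by apply: ler_wpM2l (tp_le m); apply: exprn_ge0.
Qed.

End PartialSums.

Section BernoulliTree.
Variables (R : realType) (n : nat) (T : bftree n R).

Definition in_cube (x : 'rV[R]_n) := forall i, 0 <= x ord0 i <= 1.

Definition coin_prob (x : 'rV[R]_n) (i : 'I_n) (b : bool) : R :=
  if b then x ord0 i else 1 - x ord0 i.

Definition step_prob (x : 'rV[R]_n) (pre : seq bool) (b : bool) : R :=
  match T pre with
  | LCoin i => coin_prob x i b
  | LConst c => if b then c else 1 - c
  | _ => 0
  end.

Fixpoint coin_steps (pre p : seq bool) : seq ('I_n * bool) :=
  if p is b :: p' then
    (if T pre is LCoin i then cons (i, b) else id) (coin_steps (rcons pre b) p')
  else [::].

Lemma reach_from_cons x pre b p :
  reach_from T x pre (b :: p) = step_prob x pre b * reach_from T x (rcons pre b) p.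
Proof. by rewrite /= /step_prob; case: (T pre) => *; rewrite ?mul0r. Qed.

Lemma coin_prob_ge0 x i b : in_cube x -> 0 <= coin_prob x i b.
Proof. by move=> /(_ i); rewrite /coin_prob; case: b; lra. Qed.

Hypothesis const_in01 : forall p c, T p = @LConst n R c -> 0 < c < 1.

Lemma step_prob_ge0 x pre b : in_cube x -> 0 <= step_prob x pre b.
Proof.
rewrite /step_prob; case E: (T pre) => [i|c|v|] // x01; first exact: coin_prob_ge0.
by have := const_in01 E; case: b; lra.
Qed.

Lemma reach_from_ge0 x pre p : in_cube x -> 0 <= reach_from T x pre p.
Proof.
move=> x01; elim: p pre => [|b p IH] pre; first exact: ler01.
by rewrite reach_from_cons mulr_ge0 ?step_prob_ge0.
Qed.

Lemma term_prob_ge0 x m : in_cube x -> 0 <= term_prob T x m.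
Proof.
move=> x01; apply: sumr_ge0 => p _.
by case: (T (tval p)) => // v; exact: reach_from_ge0.
Qed.

(* A path that [y] cannot follow, although [y] charges every coin outcome on
   it, must run into a leaf or a missing node. *)
Lemma reach_from_eq0_of_notin y a pre p :
  (forall i b, (i, b) != a -> 0 < coin_prob y i b) ->
  a \notin coin_steps pre p -> reach_from T y pre p = 0 ->
  forall x, reach_from T x pre p = 0.
Proof.
move=> y_gt0; elim: p pre => [|b p IH] pre; first by move=> _ /eqP; rewrite oner_eq0.
move=> a_notin y0 x; move: y0; rewrite !reach_from_cons => /eqP; rewrite mulf_eq0 => y0.
have notin_rest : a \notin coin_steps (rcons pre b) p.
  by move: a_notin => /=; case: (T pre) => // i; rewrite in_cons negb_or => /andP[].
have step0 : step_prob y pre b = 0 -> step_prob x pre b = 0.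
  move: a_notin => /=; rewrite /step_prob; case: (T pre) => // i.
  by rewrite in_cons negb_or eq_sym => /andP[/y_gt0 + _] yib0; rewrite yib0 ltxx.
case/orP: y0 => /eqP y0; first by rewrite (step0 y0) mul0r.
by rewrite (IH _ notin_rest y0) mulr0.
Qed.

Lemma reach_from_le_ratio (rare : pred ('I_n * bool)) x x0 (r rho : R) pre p :
  in_cube x -> in_cube x0 -> 0 <= r -> 1 <= rho ->
  (forall i b, rare (i, b) -> coin_prob x i b = r * coin_prob x0 i b) ->
  (forall i b, ~~ rare (i, b) -> coin_prob x i b <= rho * coin_prob x0 i b) ->
  reach_from T x pre p
    <= r ^+ count rare (coin_steps pre p) * rho ^+ size p * reach_from T x0 pre p.
Proof.
move=> x01 x001 r0 rho1 rareE freq_le.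
elim: p pre => [|b p IH] pre; first by rewrite !expr0 !mulr1.
pose e : bool := if T pre is LCoin i then rare (i, b) else false.
have countE : count rare (coin_steps pre (b :: p))
              = (e + count rare (coin_steps (rcons pre b) p))%N.
  by rewrite /e /=; case: (T pre).
have step_le : step_prob x pre b <= r ^+ e * rho * step_prob x0 pre b.
  have rho0 : 0 <= rho by apply: le_trans rho1.
  rewrite /e /step_prob; case E: (T pre) => [i|c|v|]; rewrite ?mulr0 //=.
    case rib: (rare (i, b)); last by rewrite mul1r freq_le ?rib.
    by rewrite rareE // -mulrA ler_wpM2l // ler_peMl // coin_prob_ge0.
  by rewrite mul1r ler_peMl //; have := const_in01 E; case: (b); lra.
rewrite !reach_from_cons countE /= exprD exprS.
rewrite [X in _ <= X](_ : _ = r ^+ e * rho * step_prob x0 pre b *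
  (r ^+ count rare (coin_steps (rcons pre b) p) * rho ^+ size p *
   reach_from T x0 (rcons pre b) p)); last by ring.
by apply: ler_pM; rewrite ?step_prob_ge0 ?reach_from_ge0.
Qed.

Definition depth_mean (w : 'rV[R]_n -> R) (x : 'rV[R]_n) (m : nat) : R :=
  \sum_(p : m.-tuple bool) (if T (tval p) is LLeaf v then reach T x p * w v else 0).

Lemma depth_mean_one_sub_cvg x (j : 'I_n) (l : R) :
  (fun N => \sum_(m < N) term_prob T x m) @ \oo --> (1 : R) ->
  (fun N => \sum_(m < N) out_contrib T x j m) @ \oo --> l ->
  (fun N => \sum_(m < N) depth_mean (fun v => 1 - v ord0 j) x m) @ \oo --> 1 - l.
Proof.
move=> term1 out_l.
rewrite (_ : (fun N => _) = fun N =>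
  \sum_(m < N) term_prob T x m - \sum_(m < N) out_contrib T x j m).
  exact: cvgB term1 out_l.
apply: funext => N; rewrite -sumrB; apply: eq_bigr => m _.
rewrite /depth_mean /term_prob /out_contrib -sumrB; apply: eq_bigr => p _.
by case: (T (tval p)) => *; rewrite ?subrr // mulrBr mulr1.
Qed.

Lemma reach_leaf_eq0 (w : 'rV[R]_n -> R) y :
  in_cube y -> (forall p v, T p = @LLeaf n R v -> 0 <= w v) ->
  (fun N => \sum_(m < N) depth_mean w y m) @ \oo --> 0 ->
  forall p v, T p = @LLeaf n R v -> 0 < w v -> reach T y p = 0.
Proof.
move=> y01 w_ge0 mean0 p v Tp wv.
have term_ge0 m (q : m.-tuple bool) :
    0 <= (if T (tval q) is LLeaf v then reach T y q * w v else 0).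
  by case E: (T (tval q)) => //; rewrite mulr_ge0 ?reach_from_ge0 // (w_ge0 _ _ E).
have mean_ge0 m : 0 <= depth_mean w y m by apply: sumr_ge0 => q _; exact: term_ge0.
move/(_ (size p)): (partial_sum_cvg0_eq0 mean_ge0 mean0).
move/psumr_eq0P => /(_ (fun q _ => term_ge0 _ q) (in_tuple p) isT) /=.
by rewrite Tp => /eqP; rewrite mulf_eq0 (gt_eqF wv) orbF => /eqP.
Qed.

Lemma unreachable_or_visits (w : 'rV[R]_n -> R) y a p v :
  in_cube y -> (forall i b, (i, b) != a -> 0 < coin_prob y i b) ->
  (forall q u, T q = @LLeaf n R u -> 0 <= w u) ->
  (fun N => \sum_(m < N) depth_mean w y m) @ \oo --> 0 ->
  T p = LLeaf v -> 0 < w v ->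
  (forall x, reach T x p = 0) \/ a \in coin_steps [::] p.
Proof.
move=> y01 y_gt0 w_ge0 mean0 Tp wv.
have [|a_notin] := boolP (a \in coin_steps [::] p); first by right.
have y_misses : reach T y p = 0 := reach_leaf_eq0 y01 w_ge0 mean0 Tp wv.
by left; apply: reach_from_eq0_of_notin y_gt0 a_notin y_misses.
Qed.

Lemma term_prob_le_tail x m :
  in_cube x -> (fun N => \sum_(i < N) term_prob T x i) @ \oo --> (1 : R) ->
  term_prob T x m.+1 <= tail_prob T x m.
Proof.
move=> x01 term1; have := partial_sum_le_lim (fun i => term_prob_ge0 i x01) term1 m.+2.
by rewrite big_ord_recr /= /tail_prob; lra.
Qed.

Hypothesis leaf_in_cube : forall p v, T p = @LLeaf n R v -> in_cube v.

Section RareSteps.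
Variables (rare : pred ('I_n * bool)) (x x0 : 'rV[R]_n) (r rho : R) (j : 'I_n).
Hypotheses (x01 : in_cube x) (x001 : in_cube x0).
Hypotheses (r0 : 0 <= r) (r1 : r <= 1) (rho1 : 1 <= rho).
Hypothesis rareE : forall i b, rare (i, b) -> coin_prob x i b = r * coin_prob x0 i b.
Hypothesis freq_le :
  forall i b, ~~ rare (i, b) -> coin_prob x i b <= rho * coin_prob x0 i b.
Hypothesis leaf_rare : forall p v, T p = @LLeaf n R v -> 0 < v ord0 j ->
  reach T x p = 0 \/ (1 < count rare (coin_steps [::] p))%N.

Lemma out_contrib_le_ratio m :
  out_contrib T x j m <= r ^+ 2 * (rho ^+ m * term_prob T x0 m).
Proof.
rewrite /out_contrib /term_prob !mulr_sumr; apply: ler_sum => p _.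
case Tp: (T (tval p)) => [i|c|v|]; rewrite ?mulr0 //.
have /andP[vj0 vj1] := leaf_in_cube Tp j.
have reach_x_ge0 : 0 <= reach T x p by exact: reach_from_ge0.
have rhs_ge0 : 0 <= r ^+ 2 * (rho ^+ m * reach T x0 p).
  by rewrite !mulr_ge0 ?exprn_ge0 ?reach_from_ge0 // (le_trans ler01 rho1).
have [vj_le0|vj_gt0] := lerP (v ord0 j) 0.
  by apply: le_trans rhs_ge0; rewrite mulr_ge0_le0.
case: (leaf_rare Tp vj_gt0) => [->|two_rare]; first by rewrite mul0r.
apply: le_trans (ler_piMr reach_x_ge0 vj1) _.
apply: le_trans (reach_from_le_ratio [::] (tval p) x01 x001 r0 rho1 rareE freq_le) _.
rewrite size_tuple mulrA ler_wpM2r ?reach_from_ge0 //.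
by rewrite ler_wpM2r ?exprn_ge0 ?(le_trans ler01 rho1) ?ler_wiXn2l.
Qed.

Lemma mean_coord_le_ratio (c : R) :
  0 <= c -> rho * c < 1 ->
  term_prob T x0 0 <= 1 -> (forall m, term_prob T x0 m.+1 <= c ^+ m) ->
  (fun N => \sum_(m < N) out_contrib T x j m) @ \oo --> x ord0 j ->
  x ord0 j <= r ^+ 2 * (1 + rho / (1 - rho * c)).
Proof.
move=> c0 rhoc tp0 tp_le mean_x; apply: (cvgr_to_le mean_x); apply: nearW => N.
apply: (le_trans (y := \sum_(m < N) r ^+ 2 * (rho ^+ m * term_prob T x0 m))).
  by apply: ler_sum => m _; exact: out_contrib_le_ratio.
rewrite -mulr_sumr ler_wpM2l ?exprn_ge0 //.
by apply: weighted_sum_le => // m; exact: term_prob_ge0.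
Qed.

End RareSteps.
End BernoulliTree.

Lemma strong_BF_const (R : realType) (n : nat) (S : set 'rV[R]_n) (T : bftree n R) p c :
  strong_BF S T -> T p = @LConst n R c -> 0 < c < 1.
Proof. by move=> [labels _] Tp; have := labels p; rewrite Tp. Qed.

Lemma strong_BF_leaf (R : realType) (n : nat) (S : set 'rV[R]_n) (T : bftree n R) p
    (v : 'rV[R]_n) :
  strong_BF S T -> T p = LLeaf v -> S v.
Proof. by move=> [labels _] Tp; have := labels p; rewrite Tp => -[]. Qed.

Section PolytopePoints.
Variables (R : realType) (n k : nat).

Lemma sum_if_ltn (a b : R) : (k <= n)%N ->
  \sum_(i < n) (if (i < k)%N then a else b) = a *+ k + b *+ (n - k).
Proof.
move=> kn; rewrite -(big_mkord xpredT (fun i => if (i < k)%N then a else b)).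
rewrite (big_cat_nat (leq0n k) kn) /=.
rewrite (@eq_big_nat _ _ _ 0 k _ (fun _ => a)); last by move=> i /andP[_ ->].
rewrite (@eq_big_nat _ _ _ k n _ (fun _ => b)); last first.
  by move=> i /andP[ki _]; rewrite ltnNge ki.
by rewrite !sumr_const_nat subn0.
Qed.

Lemma sum_if_eq (j : 'I_n) (a b : R) :
  \sum_(i < n) (if i == j then a else b) = a + b *+ n.-1.
Proof.
rewrite (bigD1 j) //= eqxx; congr (_ + _).
rewrite (eq_bigr (fun _ => b)); last by move=> i /negbTE ->.
by rewrite sumr_const cardC1 card_ord.
Qed.

Lemma Pkn_exists_lt1 (v : 'rV[R]_n) (j : 'I_n) :
  Pkn R n k v -> (k <= j)%N -> 0 < v ord0 j ->
  exists2 i : 'I_n, (i < k)%N & v ord0 i < 1.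
Proof.
move=> [v01 vsum] kj vj.
have [i /andP[ik vi]|all_ge1] := pickP (fun i : 'I_n => (i < k)%N && (v ord0 i < 1)).
  by exists i.
have kn : (k <= n)%N by apply: leq_trans (ltnW (ltn_ord j)).
have : \sum_(i < n) ((if (i < k)%N then 1 else 0) + (if i == j then v ord0 j else 0))
       <= \sum_(i < n) v ord0 i.
  apply: ler_sum => i _; have /andP[vi0 _] := v01 i.
  case: ifP => ik.
    have /negbTE -> : i != j by apply: contraTneq ik => ->; rewrite -leqNgt.
    by move: (all_ge1 i); rewrite ik /= => /negbT; rewrite -leNgt addr0.
  by rewrite add0r; case: eqP => [->|].
by rewrite big_split /= sum_if_ltn // sum_if_eq vsum !mul0rn !addr0; lra.
Qed.

Definition spike (j : 'I_n) (a b : R) : 'rV[R]_n := \row_i if i == j then a else b.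

Lemma spike_Pkn j (a b : R) :
  0 <= a <= 1 -> 0 <= b <= 1 -> a + b *+ n.-1 = k%:R -> Pkn R n k (spike j a b).
Proof.
move=> a01 b01 sumE; split => [i|]; first by rewrite mxE; case: ifP.
by under eq_bigr => i _ do rewrite mxE; rewrite sum_if_eq.
Qed.

Lemma Pkn_in_cube (x : 'rV[R]_n) : Pkn R n k x -> in_cube x.
Proof. by case. Qed.

Definition tilt_slope : R := k%:R / (n - k)%:R.

Definition tilt (e : R) : 'rV[R]_n :=
  \row_i if (i < k)%N then 1 - e else tilt_slope * e.

(* The coin outcomes whose probability at [tilt e] is proportional to [e]. *)
Definition rare (s : 'I_n * bool) : bool := if s.2 then (k <= s.1)%N else (s.1 < k)%N.

Section Tilt.
Hypothesis k_lt_n : (k < n)%N.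
Local Notation s := tilt_slope.

Let s_ge0 : 0 <= s.
Proof. by rewrite divr_ge0. Qed.

Lemma tilt_Pkn (e : R) : 0 <= e -> (1 + s) * e <= 1 -> Pkn R n k (tilt e).
Proof.
move=> e0 se1; have se0 : 0 <= s * e by rewrite mulr_ge0.
have nk : (0 : R) < (n - k)%:R by rewrite ltr0n subn_gt0.
split => [i|]; first by rewrite mxE; case: ifP => _; lra.
under eq_bigr => i _ do rewrite mxE.
rewrite (sum_if_ltn _ _ (ltnW k_lt_n)) -(mulr_natr (1 - e)) -(mulr_natr (_ * e)).
by rewrite /s; field; rewrite gt_eqF.
Qed.

Lemma tilt_coin_prob_rare (e e0 : R) i b : e0 != 0 -> rare (i, b) ->
  coin_prob (tilt e) i b = e / e0 * coin_prob (tilt e0) i b.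
Proof.
move=> e0_neq0; rewrite /rare /coin_prob !mxE; case: b => /= ik.
  by rewrite ltnNge ik /=; field.
by rewrite ik; field.
Qed.

Lemma tilt_coin_prob_le (e e0 rho : R) i b : ~~ rare (i, b) ->
  0 <= e -> 0 <= e0 -> 0 <= rho -> 1 <= rho * (1 - (1 + s) * e0) ->
  coin_prob (tilt e) i b <= rho * coin_prob (tilt e0) i b.
Proof.
move=> + e_ge0 e0_ge0 rho_ge0 rho_ge; rewrite /rare /coin_prob !mxE.
have se_ge0 : 0 <= s * e by rewrite mulr_ge0.
have se0_ge0 : 0 <= s * e0 by rewrite mulr_ge0.
case: b => /= ik; [rewrite -ltnNge in ik; rewrite ik | rewrite (negbTE ik)].
  have : rho * (1 - (1 + s) * e0) <= rho * (1 - e0) by rewrite ler_wpM2l //; lra.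
  lra.
have : rho * (1 - (1 + s) * e0) <= rho * (1 - s * e0) by rewrite ler_wpM2l //; lra.
lra.
Qed.

End Tilt.
End PolytopePoints.

Section NoExponentialFactory.
Variables (R : realType) (n k : nat) (T : bftree n R) (c : R).
Hypotheses (k_gt1 : (1 < k)%N) (k_lt : (k < n - 1)%N).
Hypothesis T_BF : strong_BF (Pkn R n k) T.
Hypothesis tail_le :
  forall x, Pkn R n k x -> forall d, (0 < d)%N -> tail_prob T x d <= c ^+ d.

Let k_lt_n : (k < n)%N. Proof. lia. Qed.
Let j0 : 'I_n := Ordinal k_lt_n.
Let const_in01 p (c' : R) := @strong_BF_const R n _ T p c' T_BF.
Let leaf_in_cube p v (Tp : T p = LLeaf v) : in_cube v := (strong_BF_leaf T_BF Tp).1.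

Lemma unreachable_or_visits_one p v :
  T p = LLeaf v -> 0 < v ord0 j0 ->
  (forall x, reach T x p = 0) \/ (j0, true) \in coin_steps T [::] p.
Proof.
move=> Tp vj0.
have n1_gt0 : (0 : R) < n.-1%:R by rewrite ltr0n -subn1; lia.
have q0 : (0 : R) < k%:R / n.-1%:R by rewrite divr_gt0 // ltr0n; lia.
have q1 : k%:R / n.-1%:R < 1 :> R by rewrite ltr_pdivrMr // mul1r ltr_nat -subn1.
pose y : 'rV[R]_n := spike j0 0 (k%:R / n.-1%:R).
have yP : Pkn R n k y.
  apply: spike_Pkn; rewrite ?lexx ?ler01 ?ltW //.
  by rewrite add0r -(mulr_natr (_ / _)) divfK ?gt_eqF.
apply: (unreachable_or_visits const_in01 (w := fun u => u ord0 j0) (Pkn_in_cube yP))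
  Tp vj0.
- move=> i b; rewrite /coin_prob mxE.
  by have [->|_] := eqVneq i j0; case: b; rewrite ?eqxx //= => _; lra.
- by move=> q u Tq; have /andP[] := leaf_in_cube Tq j0.
- by have := T_BF.2.2 _ yP j0; rewrite mxE eqxx.
Qed.

Lemma unreachable_or_visits_zero p v i :
  T p = LLeaf v -> v ord0 i < 1 ->
  (forall x, reach T x p = 0) \/ (i, false) \in coin_steps T [::] p.
Proof.
move=> Tp vi.
have n1_gt0 : (0 : R) < n.-1%:R by rewrite ltr0n -subn1; lia.
have kR_lt : (k%:R : R) < n.-1%:R by rewrite ltr_nat -subn1.
have kR_gt1 : (1 : R) < k%:R by rewrite ltr1n.
have q0 : (0 : R) < (k%:R - 1) / n.-1%:R by rewrite divr_gt0 //; lra.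
have q1 : (k%:R - 1) / n.-1%:R < 1 :> R by rewrite ltr_pdivrMr //; lra.
pose y : 'rV[R]_n := spike i 1 ((k%:R - 1) / n.-1%:R).
have yP : Pkn R n k y.
  apply: spike_Pkn; rewrite ?lexx ?ler01 ?ltW //.
  by rewrite -(mulr_natr (_ / _)) divfK ?gt_eqF // addrC subrK.
apply: (unreachable_or_visits const_in01 (w := fun u => 1 - u ord0 i) (Pkn_in_cube yP))
  Tp _.
- move=> i' b; rewrite /coin_prob mxE.
  by have [->|_] := eqVneq i' i; case: b; rewrite ?eqxx //= => _; lra.
- by move=> q u Tq; have /andP[] := leaf_in_cube Tq i; rewrite subr_ge0.
- have := depth_mean_one_sub_cvg (T_BF.2.1 _ yP) (T_BF.2.2 _ yP i).
  by rewrite mxE eqxx subrr.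
- by rewrite subr_gt0.
Qed.

Lemma leaf_rare_steps p (v : 'rV[R]_n) :
  T p = LLeaf v -> 0 < v ord0 j0 ->
  (forall x, reach T x p = 0) \/ (1 < count (rare k) (coin_steps T [::] p))%N.
Proof.
move=> Tp vj0.
have [i1 i1k vi1] := Pkn_exists_lt1 (j := j0) (strong_BF_leaf T_BF Tp) (leqnn k) vj0.
case: (unreachable_or_visits_one Tp vj0) => [|in0]; first by left.
case: (unreachable_or_visits_zero Tp vi1) => [|in1]; first by left.
by right; apply: (count_gt1 _ _ _ in0 in1); rewrite /rare //= xpair_eqE andbF.
Qed.

Lemma term_prob_succ_le x : Pkn R n k x -> forall m, term_prob T x m.+1 <= c ^+ m.
Proof.
move=> xP m; have x01 := Pkn_in_cube xP.
apply: le_trans (term_prob_le_tail const_in01 m x01 (T_BF.2.1 _ xP)) _.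
case: m => [|m]; last exact: tail_le.
by rewrite /tail_prob big_ord1 expr0 gerBl (term_prob_ge0 const_in01 _ x01).
Qed.

Lemma term_prob0_le1 x : Pkn R n k x -> term_prob T x 0 <= 1.
Proof.
move=> xP; have tp_ge0 m := term_prob_ge0 const_in01 m (Pkn_in_cube xP).
by have := partial_sum_le_lim tp_ge0 (T_BF.2.1 _ xP) 1; rewrite big_ord1.
Qed.

Lemma rate_ge0 : 0 <= c.
Proof.
have xP : Pkn R n k (tilt n k 0) by apply: tilt_Pkn; rewrite ?mulr0 ?lexx ?ler01.
have := tail_le xP (isT : (0 < 1)%N); rewrite expr1.
have := term_prob_le_tail const_in01 1 (Pkn_in_cube xP) (T_BF.2.1 _ xP).
have := term_prob_ge0 const_in01 2 (Pkn_in_cube xP).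
lra.
Qed.

Lemma tilt_mean_le (e e0 : R) : c < 1 -> 0 < e -> e <= e0 ->
  (1 + tilt_slope R n k) * e0 <= (1 - c) / 2 ->
  tilt_slope R n k * e <= (e / e0) ^+ 2 * (1 + 2 / (1 - c)).
Proof.
move=> c_lt1 e_gt0 e_le e0_le; have c_ge0 := rate_ge0.
have s_ge0 : 0 <= tilt_slope R n k by rewrite divr_ge0.
have e0_gt0 : 0 < e0 := lt_le_trans e_gt0 e_le.
have tiltP t : 0 <= t <= e0 -> Pkn R n k (tilt n k t).
  case/andP=> t_ge0 t_le; apply: tilt_Pkn => //.
  have : (1 + tilt_slope R n k) * t <= (1 + tilt_slope R n k) * e0.
    by rewrite ler_wpM2l // addr_ge0.
  lra.
have xP : Pkn R n k (tilt n k e) by apply: tiltP; rewrite (ltW e_gt0).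
have x0P : Pkn R n k (tilt n k e0) by apply: tiltP; rewrite lexx (ltW e0_gt0).
pose rho : R := 2 / (1 + c).
have rho_ge0 : 0 <= rho by rewrite divr_ge0 //; lra.
have rho_e0 : 1 <= rho * (1 - (1 + tilt_slope R n k) * e0).
  by rewrite /rho mulrAC ler_pdivlMr; lra.
have rho_ge1 : 1 <= rho.
  apply: le_trans rho_e0 (ler_piMr rho_ge0 _).
  by rewrite gerBl mulr_ge0 // ?addr_ge0 // ltW.
have rhoc : rho * c < 1 by rewrite /rho mulrAC ltr_pdivrMr; lra.
have := mean_coord_le_ratio const_in01 leaf_in_cube (rare := rare k)
  (x := tilt n k e) (x0 := tilt n k e0) (r := e / e0) (rho := rho) (j := j0)
  (Pkn_in_cube xP) (Pkn_in_cube x0P) _ _ rho_ge1 _ _ _ c_ge0 rhoc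
  (term_prob0_le1 x0P) (term_prob_succ_le x0P) (T_BF.2.2 _ xP j0).
rewrite mxE ltnn.
have -> : rho / (1 - rho * c) = 2 / (1 - c).
  by rewrite /rho; field; rewrite !lt0r_neq0 //; lra.
apply.
- by rewrite divr_ge0 // ltW.
- by rewrite ler_pdivrMr // mul1r.
- by move=> i b; apply: tilt_coin_prob_rare; rewrite lt0r_neq0.
- by move=> i b nr; apply: tilt_coin_prob_le nr _ _ rho_ge0 rho_e0; rewrite ltW.
- move=> p v Tp vj.
  by case: (leaf_rare_steps Tp vj) => [/(_ (tilt n k e))|]; [left|right].
Qed.

End NoExponentialFactory.

Theorem theorem7p1 (R : realType) (n k : nat) :
  (1 < k)%N -> (k < n - 1)%N ->
  ~ exists T : bftree n R, strong_BF (Pkn R n k) T /\ converges_exp (Pkn R n k) T.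
Proof.
move=> k_gt1 k_lt [T [T_BF [c [c_lt1 tail_le]]]].
have c_ge0 := rate_ge0 k_gt1 k_lt T_BF tail_le.
pose s := tilt_slope R n k; pose K := 1 + 2 / (1 - c).
have s_gt0 : 0 < s by rewrite divr_gt0 // ltr0n ?subn_gt0; lia.
have K_ge1 : 1 <= K by rewrite lerDl divr_ge0 // subr_ge0 ltW.
pose e0 := (1 - c) / (2 * (1 + s)); pose e := s * e0 ^+ 2 / (2 * K).
have e0_gt0 : 0 < e0 by rewrite divr_gt0 // ?mulr_gt0; lra.
have e0E : (1 + s) * e0 = (1 - c) / 2 by rewrite /e0; field; rewrite lt0r_neq0 //; lra.
have e0_le : (1 + s) * e0 <= (1 - c) / 2 by rewrite e0E.
have e_gt0 : 0 < e by apply: divr_gt0; apply: mulr_gt0 => //; [exact: exprn_gt0 | lra].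
have e_le : e <= e0.
  rewrite /e ler_pdivrMr ?mulr_gt0 //; last lra.
  by rewrite expr2 mulrA mulrC (ler_wpM2l (ltW e0_gt0)); lra.
have := tilt_mean_le k_gt1 k_lt T_BF tail_le c_lt1 e_gt0 e_le e0_le.
rewrite -/s -/K; have -> : (e / e0) ^+ 2 * K = s * e / 2.
  by rewrite /e; field; rewrite !lt0r_neq0 //; lra.
have : 0 < s * e by rewrite mulr_gt0.
lra.
Qed.
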